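(* Let $\mathcal{X}\subseteq\mathbb{R}^d$ and let $\mathcal{M}$ be a mechanism on weighted data sets admitting a weighted distinguishability profile $\epsilon\colon[1,\infty)\times\mathcal{X}\to\mathbb{R}_{\ge0}$ that is differentiable in $w$, with $\epsilon'(w,\mathbf{x})=\partial\epsilon(w,\mathbf{x})/\partial w$. Let $\widetilde{\mathcal{M}}(\{\mathbf{x}_i\}_{i=1}^n)=\mathcal{M}(\{(1,\mathbf{x}_i)\}_{i=1}^n)$ be its unweighted counterpart and $\tilde\epsilon(\mathbf{x})=\epsilon(1,\mathbf{x})$. Then there is a Poisson importance sampler $S$ such that the following holds, where $\psi$ denotes the distinguishability profile of $\mathcal{M}\circ S$ given by $\psi(\mathbf{x})=\log\big(1+q(\mathbf{x})(e^{\epsilon(1/q(\mathbf{x}),\mathbf{x})}-1)\big)$ with $q$ the selection-probability function of $S$: for any $\mathbf{x}\in\mathcal{X}$, if $\epsilon'(1,\mathbf{x})<1-e^{-\epsilon(1,\mathbf{x})}$, then $\psi(\mathbf{x})<\tilde\epsilon(\mathbf{x})$.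
   Context: A weighted data set is a finite set $\{(w_i,\mathbf{x}_i)\}$ with $w_i\ge1$, $\mathbf{x}_i\in\mathcal{X}$. Distributions $P,Q$ are $\epsilon$-indistinguishable if $P(Y)\le e^\epsilon Q(Y)$ and $Q(Y)\le e^\epsilon P(Y)$ for all measurable $Y$. A weighted distinguishability profile of $\mathcal{M}$ is a function $\epsilon\colon[1,\infty)\times\mathcal{X}\to\mathbb{R}_{\ge0}$ such that for every weighted data set $\mathcal{S}$ and every $(w',\mathbf{x}')$, $\mathcal{M}(\mathcal{S})$ and $\mathcal{M}(\mathcal{S}\cup\{(w',\mathbf{x}')\})$ are $\epsilon(w',\mathbf{x}')$-indistinguishable. A Poisson importance sampler for a function $q\colon\mathcal{X}\to(0,1]$ maps $\mathcal{D}=\{\mathbf{x}_1,\dots,\mathbf{x}_n\}$ to $\{(1/q(\mathbf{x}_i),\mathbf{x}_i)\mid\gamma_i=1\}$ with $\gamma_i$ independent Bernoulli$(q(\mathbf{x}_i))$. A distinguishability profile $\psi$ of an unweighted mechanism $\mathcal{A}$ means $\mathcal{A}(\mathcal{D})$ and $\mathcal{A}(\mathcal{D}\cup\{\mathbf{x}\})$ are $\psi(\mathbf{x})$-indistinguishable for all data sets $\mathcal{D}$ and points $\mathbf{x}$; it is known that the stated $\psi$ is such a profile of $\mathcal{M}\circ S$. *)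

From HB Require Import structures.
From mathcomp Require Import all_boot all_order all_algebra.
From mathcomp Require Import finmap.
From mathcomp Require Import all_classical all_reals all_analysis.
Set Implicit Arguments. Unset Strict Implicit. Unset Printing Implicit Defensive.
Import Order.TTheory GRing.Theory Num.Theory.
Local Open Scope ring_scope.

Definition wdataset (R : realType) (d : nat) := {fset (R * 'rV[R]_d)}.

Definition valid_wds (R : realType) (d : nat) (Xs : set 'rV[R]_d)
  (S : wdataset R d) : Prop :=
  forall p, p \in S -> 1 <= p.1 /\ Xs p.2.

Definition indist (R : realType) (dT : measure_display) (T : measurableType dT)
  (P Q : probability T R) (e : R) : Prop :=
  forall Y : set T, measurable Y ->
    (P Y <= (expR e)%:E * Q Y)%E /\ (Q Y <= (expR e)%:E * P Y)%E.

Definition weighted_profile (R : realType) (d : nat) (Xs : set 'rV[R]_d)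
  (dT : measure_display) (T : measurableType dT)
  (M : wdataset R d -> probability T R) (eps : R -> 'rV[R]_d -> R) : Prop :=
  (forall w x, 1 <= w -> Xs x -> 0 <= eps w x) /\
  forall S : wdataset R d, valid_wds Xs S ->
  forall w' x', 1 <= w' -> Xs x' ->
    indist (M S) (M (S `|` [fset (w', x')])%fset) (eps w' x').

Definition unweighted (R : realType) (d : nat) (dT : measure_display)
  (T : measurableType dT) (M : wdataset R d -> probability T R)
  (D : {fset 'rV[R]_d}) : probability T R :=
  M [fset ((1 : R), x) | x in D]%fset.

Definition eps_tilde (R : realType) (d : nat) (eps : R -> 'rV[R]_d -> R)
  (x : 'rV[R]_d) : R := eps 1 x.

(* profile of M o S for the Poisson importance sampler with selection
   probability q *)
Definition psi (R : realType) (d : nat) (eps : R -> 'rV[R]_d -> R)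
  (q : 'rV[R]_d -> R) (x : 'rV[R]_d) : R :=
  ln (1 + q x * (expR (eps (q x)^-1 x) - 1)).

From HB Require Import structures.
From mathcomp Require Import all_boot all_order all_algebra.
From mathcomp Require Import finmap.
From mathcomp Require Import all_classical all_reals all_analysis.
From mathcomp Require Import lra.
Import Order.TTheory GRing.Theory Num.Theory.
Import numFieldNormedType.Exports.
Local Open Scope classical_set_scope.
Local Open Scope ring_scope.

(* With w = 1/q, g(w) = ln (1 + (e^(eps(w, x)) - 1) / w) satisfies
   g(1) = eps(1, x) and has right derivative eps'(1, x) - (1 - e^(-eps(1, x)))
   at w = 1. When this is negative, g(w) < g(1) for all w slightly above 1, so
   a selection probability q(x) slightly below 1 beats the unweighted profile. *)

Section SubsamplingGain.
Context {R : realType}.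

Lemma near_right0_mulr_lt (k m : R) :
  0 < m -> \forall h \near (0 : R)^'+, h * k < m.
Proof.
move=> m_gt0.
have hk0 : (fun h => h * k) @ (0 : R)^'+ --> 0.
  apply: cvg_at_right_filter; rewrite -[X in _ --> X](mul0r k).
  by apply: cvgM; [exact: cvg_id | exact: cvg_cst].
exact: cvgr_lt _ hk0 _ m_gt0.
Qed.

Lemma near_right0_expR_lt (b c : R) :
  c < b -> \forall h \near (0 : R)^'+, expR (h * c) < 1 + h * b.
Proof.
move=> cb; near=> h.
have h_gt0 : 0 < h by near: h; exact: nbhs_right_gt.
have hc_lt1 : h * c < 1 by near: h; exact: near_right0_mulr_lt.
have hbc_lt : h * (b * c) < b - c by near: h; apply: near_right0_mulr_lt; lra.
set u := expR (h * c).
have u_gt0 : 0 < u := expR_gt0 _.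
(* expR (h c) <= 1 / (1 - h c) < 1 + h b *)
have u_le : u * (1 - h * c) <= 1.
  have uV : u * u^-1 = 1 by rewrite mulfV ?gt_eqF.
  have : 1 - h * c <= u^-1 by rewrite /u -expRN expR_ge1Dx.
  nra.
have : 1 < (1 + h * b) * (1 - h * c) by nra.
nra.
Unshelve. all: by end_near.
Qed.

Lemma near_right_quotient_lt (f : R -> R) (a l c : R) :
  (fun h => h^-1 * (f (a + h) - f a)) @ (0 : R)^'+ --> l -> l < c ->
  \forall h \near (0 : R)^'+, f (a + h) < f a + h * c.
Proof.
move=> fl lc; near=> h.
have h_gt0 : 0 < h by near: h; exact: nbhs_right_gt.
have : h^-1 * (f (a + h) - f a) < c by near: h; exact: cvgr_lt _ fl _ lc.
rewrite ltr_pdivrMl //; lra.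
Unshelve. all: by end_near.
Qed.

Lemma ln_subsample_lt (a e h : R) :
  0 < h -> expR e < (1 + h) * expR a - h ->
  ln (1 + (1 + h)^-1 * (expR e - 1)) < a.
Proof.
move=> h_gt0 e_lt.
have h1_gt0 : 0 < 1 + h by lra.
have k_gt0 : 0 < (1 + h)^-1 by rewrite invr_gt0.
have k_lt1 : (1 + h)^-1 < 1 by rewrite invf_lt1 //; lra.
have e_gt0 := expR_gt0 e.
have arg_gt0 : 0 < 1 + (1 + h)^-1 * (expR e - 1) by nra.
have arg_lt : 1 + (1 + h)^-1 * (expR e - 1) < expR a.
  have : expR e - 1 < (1 + h) * (expR a - 1) by lra.
  by rewrite -ltr_pdivrMl // mulrC; lra.
by rewrite -[ltRHS]expRK ltr_ln ?posrE ?expR_gt0.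
Qed.

Lemma near_right_subsample_lt (f : R -> R) (l : R) :
  (fun h => h^-1 * (f (1 + h) - f 1)) @ (0 : R)^'+ --> l ->
  l < 1 - expR (- f 1) ->
  \forall h \near (0 : R)^'+,
    ln (1 + (1 + h)^-1 * (expR (f (1 + h)) - 1)) < f 1.
Proof.
set b := 1 - expR (- f 1) => fl lb.
set c := (l + b) / 2.
have lc : l < c by rewrite /c; lra.
have cb : c < b by rewrite /c; lra.
have Eb : expR (f 1) * b = expR (f 1) - 1.
  by rewrite /b mulrBr mulr1 expRN mulfV ?gt_eqF ?expR_gt0.
have E_gt0 := expR_gt0 (f 1).
near=> h.
have h_gt0 : 0 < h by near: h; exact: nbhs_right_gt.
apply: ln_subsample_lt => //.
have f_lt : f (1 + h) < f 1 + h * c by near: h; exact: near_right_quotient_lt fl lc.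
have u_lt : expR (h * c) < 1 + h * b by near: h; exact: near_right0_expR_lt cb.
have : expR (f (1 + h)) < expR (f 1) * expR (h * c) by rewrite -expRD ltr_expR.
nra.
Unshelve. all: by end_near.
Qed.

End SubsamplingGain.

Theorem proposition2 (R : realType) (d : nat) (Xs : set 'rV[R]_d)
  (dT : measure_display) (T : measurableType dT)
  (M : wdataset R d -> probability T R)
  (eps eps' : R -> 'rV[R]_d -> R) :
  weighted_profile Xs M eps ->
  (* eps is differentiable in w on [1, oo) with derivative eps'
     (one-sided from the right at the endpoint w = 1) *)
  (forall x, Xs x -> forall w, 1 < w ->
     (fun h : R => h^-1 * (eps (w + h) x - eps w x)) @ (0 : R)^' --> eps' w x) ->
  (forall x, Xs x ->
     (fun h : R => h^-1 * (eps (1 + h) x - eps 1 x)) @ (0 : R)^'+ --> eps' 1 x) ->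
  exists q : 'rV[R]_d -> R,
    (forall x, Xs x -> 0 < q x <= 1) /\
    forall x, Xs x ->
      eps' 1 x < 1 - expR (- eps 1 x) ->
      psi eps q x < eps_tilde eps x.
Proof.
move=> _ _ eps_right.
have gain_ex x : exists h : R, 0 < h /\
    (Xs x -> eps' 1 x < 1 - expR (- eps 1 x) ->
     ln (1 + (1 + h)^-1 * (expR (eps (1 + h) x) - 1)) < eps 1 x).
  have [[Xx lt_eps']|not_gain] := pselect (Xs x /\ eps' 1 x < 1 - expR (- eps 1 x)).
    have gain := near_right_subsample_lt (eps^~ x) _ (eps_right x Xx) lt_eps'.
    have [h [h_gt0 h_gain]] := filter_ex (filterI (nbhs_right_gt 0) gain).
    by exists h.
  by exists 1; split => // Xx lt_eps'; case: not_gain.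
have [h hP] := choice gain_ex.
exists (fun x => (1 + h x)^-1); split => [x _ | x Xx lt_eps'].
  have [h_gt0 _] := hP x.
  by rewrite invr_gt0 invf_le1; lra.
by have [_ /(_ Xx lt_eps')] := hP x; rewrite /psi /eps_tilde invrK.
Qed.
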